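(* For every even $n\ge4$, $$f_n(\{2,3,\dots,\tfrac n2\})=2^{n-1}+\sum_{i=1}^{n/2-1}\sum_{j=1}^{n/2-1}\binom{i+j-2}{i-1}2^{n-i-j-2}.$$
   Context: For $m\ge1$ and a set $B$ of positive integers, $f_m(B)$ denotes the number of linear orders $q$ on $[m]$ such that for every triple $i<j<k$ in $[m]$: if $j\in B$ then $i$ is not ranked last among $\{i,j,k\}$ in $q$, and if $j\notin B$ then $k$ is not ranked first among $\{i,j,k\}$ in $q$. *)

From mathcomp Require Import all_boot all_order all_fingroup.
Set Implicit Arguments. Unset Strict Implicit. Unset Printing Implicit Defensive.

(* [m] = {1,...,m} is encoded by 'I_m via x |-> x+1.
   A linear order q on [m] is encoded by a permutation p : {perm 'I_m},
   where p x is the position (rank) of x in q: x comes before y iff p x < p y.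
   "ranked last among {i,j,k}" = largest position; "ranked first" = smallest. *)
Definition valid_order (m : nat) (B : pred nat) (p : {perm 'I_m}) : bool :=
  [forall i : 'I_m, forall j : 'I_m, forall k : 'I_m,
     ((i < j) && (j < k)) ==>
     (if B (val j).+1
      then ~~ ((p j < p i) && (p k < p i))
      else ~~ ((p k < p i) && (p k < p j)))].

Definition f (m : nat) (B : pred nat) : nat :=
  #|[set p : {perm 'I_m} | valid_order B p]|.

(* Shift the letters to {0, ..., n-1} and write a linear order as the word
   listing the letters by increasing rank.  Call a letter small if it is
   below m = n/2; a middle letter lies in B exactly when it is small.  A word
   y :: w is valid iff w is valid and its first letter y satisfies a
   condition relative to w: a small y forces every letter of w below y to
   precede all larger letters, a large y forces the letters of w below y to
   appear in increasing order, all of them but the least being small.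
   Classifying valid words by their first letter shows that their number
   F s l, and the number G s l of those whose small letters increase, depend
   only on the numbers s and l of small and large letters, through
   Pascal-like recurrences with explicit solutions.  At s = l = m the
   symmetry G s l + G l s = C(s+l, s) + 2^(s+l-1) turns F m m into the
   stated sum. *)

From mathcomp Require Import all_boot all_order all_fingroup.
From mathcomp Require Import zify.

Lemma sum_pow2 k : \sum_(i < k) 2 ^ (k.-1 - i) = (2 ^ k).-1.
Proof.
have -> : (2 ^ k).-1 = 2 ^ k - 1 ^ k by rewrite exp1n subn1.
rewrite subn_exp mul1n.
by apply: eq_bigr => i _; rewrite exp1n muln1.
Qed.

Lemma sum_pow2_shift k (u : nat -> nat) :
  \sum_(b < k) 2 ^ (k - b) * u b = 2 * \sum_(b < k) 2 ^ (k.-1 - b) * u b.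
Proof.
rewrite big_distrr; apply: eq_bigr => b _ /=; rewrite mulnA -expnS.
by congr (2 ^ _ * _); have := ltn_ord b; lia.
Qed.

Lemma bin_addC a b : 'C(a + b, a) = 'C(b + a, b).
Proof. by rewrite -{2}(addKn b a) addnC bin_sub ?leq_addr. Qed.

Lemma sum_rank (u : nat -> nat) S : sorted ltn S ->
  \sum_(y <- S) u (size [seq x <- S | y < x]) = \sum_(t < size S) u t.
Proof.
elim: S => [|a S IH] sS; first by rewrite big_nil big_ord0.
have aS := order_path_min ltn_trans sS.
rewrite big_cons big_ord_recr /= ltnn (all_filterP aS) addnC -IH ?(path_sorted sS) //.
congr (_ + _); apply: eq_big_seq => y yS.
by have := allP aS y yS; rewrite /ltn /= => ay; rewrite ltnNge (ltnW ay).
Qed.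

Lemma count_permutations_first (T : eqType) (P : pred (seq T)) (s : seq T) :
  uniq s -> 0 < size s ->
  count P (permutations s) =
  \sum_(x <- s) count (fun t => P (x :: t)) (permutations (rem x s)).
Proof.
move=> us s0; rewrite (seq.permP (permutationsE s0)) undup_id // count_flatten.
by rewrite sumnE !big_map; apply: eq_bigr => x _; rewrite count_map.
Qed.

Lemma rem_cat_l (T : eqType) (x : T) s t : x \in s -> rem x (s ++ t) = rem x s ++ t.
Proof.
elim: s => [//|y s IH]; rewrite inE /= eq_sym.
by case: eqP => //= _ /IH ->.
Qed.

Lemma rem_cat_r (T : eqType) (x : T) s t : x \notin s -> rem x (s ++ t) = s ++ rem x t.
Proof.
elim: s => [//|y s IH]; rewrite inE negb_or /= eq_sym.
by case/andP => /negbTE -> /IH ->.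
Qed.

Lemma card_set_count (T : finType) (Q : pred T) : #|[set x | Q x]| = count Q (enum T).
Proof. by rewrite cardsE cardE -size_filter /enum_mem filter_predT. Qed.

(** * Closed forms *)

(* [F s l] counts the valid words on [s] small and [l] large letters, and
   [G s l] those among them whose small letters increase. *)
Definition G (s l : nat) : nat :=
  'C(s + l, s) + \sum_(b < l.-1) 2 ^ (l.-2 - b) * 'C(s + b, s).

Definition F (s l : nat) : nat :=
  G s l + \sum_(a < s.-1) 2 ^ (s.-2 - a) * G a l.

Lemma Gn0 s : G s 0 = 1.
Proof. by rewrite /G big_ord0 !addn0 binn. Qed.

Lemma G0n l : G 0 l = 2 ^ l.-1.
Proof.
case: l => [|l]; first by rewrite Gn0.
rewrite /G /= !bin0; under eq_bigr do rewrite bin0 muln1.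
by rewrite sum_pow2 add1n prednK ?expn_gt0.
Qed.

Lemma G_pascal s l : G s.+1 l.+1 = G s l.+1 + G s.+1 l.
Proof.
have shift : \sum_(b < l) 2 ^ (l.-1 - b) * 'C(s + b, s.+1) =
             \sum_(b < l.-1) 2 ^ (l.-2 - b) * 'C(s.+1 + b, s.+1).
  case: l => [|l]; first by rewrite !big_ord0.
  rewrite big_ord_recl bin_small ?addn0 // muln0 add0n.
  apply: eq_bigr => b _; rewrite lift0 addnS -addSn; congr (2 ^ _ * _) => /=; lia.
have split : \sum_(b < l) 2 ^ (l.-1 - b) * 'C(s.+1 + b, s.+1) =
   \sum_(b < l) 2 ^ (l.-1 - b) * 'C(s + b, s.+1) +
   \sum_(b < l) 2 ^ (l.-1 - b) * 'C(s + b, s).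
  by rewrite -big_split; apply: eq_bigr => b _; rewrite addSn binS mulnDr.
rewrite /G split shift (_ : s.+1 + l.+1 = (s + l.+1).+1) ?addSn // binS !addnS.
by rewrite addnACA addnC.
Qed.

Lemma G_sym s l : G s l + G l s = 'C(s + l, s) + 2 ^ (s + l).-1.
Proof.
elim: s l => [|s IHs] l; first by rewrite G0n Gn0 bin0 addnC.
elim: l => [|l IHl]; first by rewrite G0n Gn0 addn0 binn addnC.
rewrite !G_pascal !addSn !addnS binS -[(s + l).+2.-1]/(s + l).+1 expnS.
move: (IHs l.+1) IHl; rewrite !addSn !addnS -[(s + l).+1.-1]/(s + l); lia.
Qed.

Lemma F0n l : F 0 l = 2 ^ l.-1.
Proof. by rewrite /F big_ord0 addn0 G0n. Qed.

Lemma sum_F s l :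
  \sum_(a < s) 2 ^ (s.-1 - a) * G a l =
  \sum_(a < s.-1) 2 ^ (s.-2 - a) * G a l + \sum_(t < s) F t l.
Proof.
elim: s => [|s IH]; first by rewrite !big_ord0.
rewrite big_ord_recr [in RHS]big_ord_recr /= subnn expn0 mul1n.
rewrite (sum_pow2_shift s (G^~ l)) {2}/F IH.
set X := \sum_(t < s) F t l; set Y := \sum_(a < s.-1) _; lia.
Qed.

Lemma F_rec s l :
  F s.+1 l = F s l + \sum_(t < s) F t l + (if l is l'.+1 then G s.+1 l' else 0).
Proof.
rewrite {1}/F /= sum_F [F s l]/F.
set X := \sum_(t < s) _; set Y := \sum_(a < s.-1) _.
by case: l => [|l] in X Y *; rewrite ?Gn0 ?G_pascal; lia.
Qed.

Lemma F_diag m :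
  F m m = 2 ^ (m.*2 - 1) +
    \sum_(1 <= i < m) \sum_(1 <= j < m) 'C(i + j - 2, i - 1) * 2 ^ (m.*2 - i - j - 2).
Proof.
set D := \sum_(a < m.-1) \sum_(b < m.-1) 2 ^ (m.-2 - a) * (2 ^ (m.-2 - b) * 'C(a + b, a)).
have -> : \sum_(1 <= i < m) \sum_(1 <= j < m)
    'C(i + j - 2, i - 1) * 2 ^ (m.*2 - i - j - 2) = D.
  rewrite big_add1 big_mkord; apply: eq_bigr => a _.
  rewrite big_add1 big_mkord; apply: eq_bigr => b _.
  rewrite subn1 /= (_ : a.+1 + b.+1 - 2 = a + b); last by lia.
  rewrite mulnCA mulnA -expnD mulnC; congr (2 ^ _ * _).
  by have := ltn_ord a; have := ltn_ord b; lia.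
have GmD : \sum_(a < m.-1) 2 ^ (m.-2 - a) * G a m =
           \sum_(a < m.-1) 2 ^ (m.-2 - a) * 'C(m + a, m) + D.
  rewrite /D -big_split; apply: eq_bigr => a _.
  by rewrite /G mulnDr big_distrr bin_addC.
have := G_sym m m; rewrite /F GmD /G -addnn subn1.
set S := \sum_(b < m.-1) _; lia.
Qed.

(** * Valid words *)

Definition before (w : seq nat) i j := index i w < index j w.

Definition triple_ok m w i j k :=
  if j < m then ~~ (before w j i && before w k i)
  else ~~ (before w k i && before w k j).

Definition triples_ok m w :=
  all (fun i => all (fun j => all (fun k =>
    (i < j < k) ==> triple_ok m w i j k) w) w) w.

Definition inc_below z w := all2rel (fun i k => (i < k) && (i < z) ==> before w i k) w.

Definition small_inc m w := all2rel (fun i j => (i < j < m) ==> before w i j) w.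

Definition cond_first m y w :=
  if y < m then inc_below y w
  else all2rel (fun i j => (i < j < y) ==> (j < m) && before w i j) w.

Lemma before_asym w i k : i \in w -> k \in w -> i != k -> before w k i = ~~ before w i k.
Proof.
move=> iw kw ik; have : index i w != index k w by rewrite (inj_in_eq (@index_inj _ 0 w)).
rewrite /before; lia.
Qed.

Section BeforeCons.

Variables (y : nat) (w : seq nat).
Hypothesis yw : y \notin w.

Lemma before_head j : j \in w -> before (y :: w) y j.
Proof. by move=> jw; rewrite /before /= eqxx; case: eqP jw yw => // ->->. Qed.

Lemma before_to_head i : before (y :: w) i y = false.
Proof. by rewrite /before /= eqxx ltn0. Qed.

Lemma before_cons i j : i \in w -> j \in w -> before (y :: w) i j = before w i j.
Proof.
move=> iw jw; rewrite /before /=.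
by case: eqP iw yw => [-> -> //|_]; case: eqP jw yw => [-> -> //|_].
Qed.

Variable m : nat.

Lemma triple_ok_cons i j k : i \in w -> j \in w -> k \in w ->
  triple_ok m (y :: w) i j k = triple_ok m w i j k.
Proof. by move=> iw jw kw; rewrite /triple_ok !before_cons. Qed.

Lemma triple_ok_head_first j k : triple_ok m (y :: w) y j k.
Proof. by rewrite /triple_ok !before_to_head; case: ifP. Qed.

Lemma triple_ok_head_mid i k : i \in w -> k \in w -> i != k ->
  triple_ok m (y :: w) i y k = (y < m) ==> before w i k.
Proof.
move=> iw kw ik; rewrite /triple_ok before_head // before_to_head before_cons //.
by case: ifP; rewrite ?andbF //= before_asym ?negbK.
Qed.

Lemma triple_ok_head_last i j : i \in w -> j \in w -> i != j ->
  triple_ok m (y :: w) i j y = (j < m) && before w i j.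
Proof.
move=> iw jw ij; rewrite /triple_ok !before_head // before_cons //.
by case: ifP; rewrite ?andbT //= before_asym ?negbK.
Qed.

End BeforeCons.

Lemma triples_okP m w :
  reflect (forall i j k, i \in w -> j \in w -> k \in w -> i < j < k -> triple_ok m w i j k)
          (triples_ok m w).
Proof.
apply: (iffP idP) => [H i j k iw jw kw ijk | H].
  by have := allP (allP (allP H i iw) j jw) k kw; rewrite ijk.
apply/allP => i iw; apply/allP => j jw; apply/allP => k kw; apply/implyP.
exact: H.
Qed.

Lemma triples_ok_cons m y w : y \notin w ->
  triples_ok m (y :: w) = triples_ok m w && cond_first m y w.
Proof.
move=> yw; have inyw x : x \in w -> x \in y :: w by move=> xw; rewrite inE xw orbT.
apply/triples_okP/andP => [H | [/triples_okP Hw Hy] i j k].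
  split.
    apply/triples_okP => i j k iw jw kw ijk.
    by rewrite -(triple_ok_cons _ _ yw) //; apply: H; rewrite ?inyw.
  rewrite /cond_first; case: ltnP => ym; apply/allrelP => i k iw kw; apply/implyP.
    case/andP => ik iy.
    case: (ltngtP k y) => [ky | yk | ky]; last by rewrite ky (negbTE yw) in kw.
      have := H i k y (inyw _ iw) (inyw _ kw) (mem_head _ _).
      by rewrite (triple_ok_head_last _ _ yw) ?(ltn_eqF ik) // ik ky => /(_ isT)/andP[].
    have := H i y k (inyw _ iw) (mem_head _ _) (inyw _ kw).
    by rewrite (triple_ok_head_mid _ _ yw) ?(ltn_eqF ik) // ym iy yk => /(_ isT).
  case/andP => ik ky; have := H i k y (inyw _ iw) (inyw _ kw) (mem_head _ _).
  by rewrite (triple_ok_head_last _ _ yw) ?(ltn_eqF ik) // ik ky => /(_ isT).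
rewrite !inE => /predU1P[-> | iw] /predU1P[-> | jw] /predU1P[-> | kw] /andP[ij jk];
  rewrite ?triple_ok_head_first //; try lia.
- rewrite (triple_ok_head_mid _ _ yw) ?(ltn_eqF (ltn_trans ij jk)) //.
  apply/implyP => ym; move: Hy; rewrite /cond_first ym => /allrelP/(_ i k iw kw).
  by rewrite (ltn_trans ij jk) ij.
- rewrite (triple_ok_head_last _ _ yw) ?(ltn_eqF ij) //; move: Hy; rewrite /cond_first.
  case: ifP => ym /allrelP/(_ i j iw jw); last by rewrite ij jk.
  by rewrite ij (ltn_trans ij jk) /= => ->; rewrite andbT (ltn_trans jk ym).
- by rewrite (triple_ok_cons _ _ yw) //; apply: Hw; rewrite ?ij.
Qed.

Lemma all2rel_before_cons (R : nat -> nat -> bool -> bool) y w : y \notin w ->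
  all2rel (fun i j => R i j (before (y :: w) i j)) (y :: w) =
  [&& R y y false, all (fun j => R y j true) w, all (fun i => R i y false) w
    & all2rel (fun i j => R i j (before w i j)) w].
Proof.
move=> yw; rewrite allrel_consl allrel_consr /= before_to_head.
have -> : all (fun j => R y j (before (y :: w) y j)) w = all (fun j => R y j true) w.
  by apply: eq_in_all => j jw; rewrite before_head.
have -> : all (fun i => R i y (before (y :: w) i y)) w = all (fun i => R i y false) w.
  by apply: eq_in_all => i _; rewrite before_to_head.
rewrite (@eq_in_allrel _ _ (mem w) (mem w) _ (fun i j => R i j (before w i j))) ?allss //.
  by rewrite !andbA.
by move=> i j iw jw; rewrite before_cons.
Qed.

Lemma inc_below_cons z y w : y \notin w ->
  inc_below z (y :: w) = inc_below z w && all (fun i => (i < y) ==> (z <= i)) w.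
Proof.
move=> yw; rewrite /inc_below (all2rel_before_cons (fun i k b => (i < k) && (i < z) ==> b)) //.
rewrite ltnn /=; have -> : all (fun j => (y < j) && (y < z) ==> true) w.
  by apply/allP => j _; rewrite implybT.
suff -> : all (fun i => (i < y) && (i < z) ==> false) w = all (fun i => (i < y) ==> (z <= i)) w.
  by rewrite /= andbC.
by apply: eq_all => i; rewrite implybF negb_and implybE [z <= i]leqNgt.
Qed.

Lemma small_inc_cons m y w : y \notin w ->
  small_inc m (y :: w) = small_inc m w && ((y < m) ==> all (leq y) w).
Proof.
move=> yw; rewrite /small_inc (all2rel_before_cons (fun i j b => (i < j < m) ==> b)) //.
rewrite ltnn /=; have -> : all (fun j => (y < j < m) ==> true) w.
  by apply/allP => j _; rewrite implybT.
rewrite /= andbC; congr (_ && _); case: ltnP => ym /=.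
  by apply: eq_all => i; rewrite andbT implybF -leqNgt.
by apply/allP => i _; rewrite andbF.
Qed.

Lemma cond_first_min m y w : all (ltn y) w -> cond_first m y w.
Proof.
move=> /allP yw; rewrite /cond_first; case: ifP => _; apply/allrelP => i j iw _;
  by apply/implyP => /andP[? ?]; have := yw i iw; rewrite /ltn /=; lia.
Qed.

Lemma cond_first_large_inc m y w : m <= y -> {in w, forall x, (x < y) = (x < m)} ->
  cond_first m y w = small_inc m w.
Proof.
move=> my yw; rewrite /cond_first ltnNge my /=.
apply: (@eq_in_allrel _ _ (mem w) (mem w)); rewrite ?allss // => i j _ jw /=.
by rewrite yw //; case: (j < m); rewrite ?andbF.
Qed.

Lemma cond_first_large_blocked m y w i j : m <= y -> i \in w -> j \in w ->
  i < j < y -> m <= j -> cond_first m y w = false.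
Proof.
move=> my iw jw ijy mj; rewrite /cond_first ltnNge my /=.
by apply/allrelP => /(_ i j iw jw); rewrite ijy ltnNge mj.
Qed.

Lemma cond_first_large_vacuous m y w : m <= y ->
  {in w &, forall i j, i < j -> y <= j} -> cond_first m y w.
Proof.
move=> my H; rewrite /cond_first ltnNge my /=; apply/allrelP => i j iw jw.
by apply/implyP => /andP[ij jy]; have := H i j iw jw ij; lia.
Qed.

(** * Counting valid words by their first letter *)

Definition nvalid m (Q : pred (seq nat)) Y :=
  count (fun w => triples_ok m w && Q w) (permutations Y).

Lemma eq_nvalid m Q Q' X :
  (forall w, perm_eq w X -> Q w = Q' w) -> nvalid m Q X = nvalid m Q' X.
Proof. by move=> QQ'; apply: eq_in_count => w; rewrite mem_permutations => /QQ' ->. Qed.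

Lemma nvalid_pred0 m Q X : (forall w, perm_eq w X -> Q w = false) -> nvalid m Q X = 0.
Proof.
move=> Q0; rewrite /nvalid (@eq_in_count _ _ pred0) ?count_pred0 // => w.
by rewrite mem_permutations => /Q0 ->; rewrite andbF.
Qed.

Lemma nvalid_first m Q Y : uniq Y -> 0 < size Y ->
  nvalid m Q Y = \sum_(y <- Y) nvalid m (fun w => cond_first m y w && Q (y :: w)) (rem y Y).
Proof.
move=> uY Y0; rewrite /nvalid count_permutations_first //; apply: eq_big_seq => y yY.
apply: eq_in_count => w; rewrite mem_permutations => /perm_mem wY.
by rewrite triples_ok_cons ?andbA // wY mem_rem_uniqF.
Qed.

Lemma nvalid_inc_below_ge m z Y :
  all (leq z) Y -> nvalid m (inc_below z) Y = nvalid m predT Y.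
Proof.
move=> /allP zY; apply: eq_nvalid => w /perm_mem wY; apply/allrelP => i k iw _.
by apply/implyP => /andP[_]; have := zY i; rewrite -wY iw => /(_ isT); lia.
Qed.

(* The least letter [a < z] must come first, where it is unconstrained. *)
Lemma nvalid_inc_below_min m z a Y : a < z -> all (ltn a) Y -> uniq Y ->
  nvalid m (inc_below z) (a :: Y) = nvalid m (inc_below z) Y.
Proof.
move=> az /allP aY uY; have aY' : a \notin Y by apply/negP => /aY; rewrite /ltn /= ltnn.
rewrite nvalid_first ?cons_uniq ?aY' ?uY // big_cons big1_seq ?addn0 => [|y /andP[_ yY]].
  rewrite /= eqxx; apply: eq_nvalid => w /perm_mem wY; have aw : a \notin w by rewrite wY.
  rewrite cond_first_min ?inc_below_cons //=; last by apply/allP => x; rewrite wY => /aY.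
  suff -> : all (fun i => (i < a) ==> (z <= i)) w by rewrite andbT.
  by apply/allP => x; rewrite wY => /aY; rewrite /ltn /= => ax; rewrite ltnNge (ltnW ax).
have ay : a < y := aY y yY; apply: nvalid_pred0 => w /perm_mem wY.
have yw : y \notin w by rewrite wY mem_rem_uniqF //= aY'.
rewrite inc_below_cons //.
suff /negbTE -> : ~~ all (fun i => (i < y) ==> (z <= i)) w by rewrite !andbF.
apply/allPn; exists a; first by rewrite wY rem_mem ?mem_head ?(ltn_eqF ay).
by rewrite ay -ltnNge az.
Qed.

Lemma nvalid_inc_below_filter m z S L :
  sorted ltn S -> z \notin S -> all (leq z) L -> uniq (S ++ L) ->
  nvalid m (inc_below z) (S ++ L) = nvalid m predT ([seq x <- S | z < x] ++ L).
Proof.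
elim: S => [|a S IH] sS; first by move=> _ zL _; rewrite nvalid_inc_below_ge.
rewrite inE negb_or => /andP[za zS] zL /andP[_ uSL].
have aS := order_path_min ltn_trans sS.
case: (ltnP a z) => [az | zla].
  rewrite /= ltnNge (ltnW az) -IH ?(path_sorted sS) // nvalid_inc_below_min // all_cat aS.
  by apply/allP => x /(allP zL); rewrite /ltn /=; lia.
have zaS : all (ltn z) (a :: S).
  by rewrite /= (ltn_neqAle z a) za zla; apply: sub_all aS => x; apply: leq_trans.
rewrite (all_filterP zaS) nvalid_inc_below_ge // all_cat zL andbT.
by apply: sub_all zaS => x /ltnW.
Qed.

Definition small_large m S L :=
  [&& sorted ltn S, sorted ltn L, all (fun x => x < m) S & all (leq m) L].

Lemma small_large_subseq m S L S' L' :
  subseq S' S -> subseq L' L -> small_large m S L -> small_large m S' L'.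
Proof.
move=> sS sL /and4P[sortS sortL Sm mL]; apply/and4P; split.
- exact: (subseq_sorted ltn_trans sS).
- exact: (subseq_sorted ltn_trans sL).
- by apply/allP => x /(mem_subseq sS) /(allP Sm).
- by apply/allP => x /(mem_subseq sL) /(allP mL).
Qed.

Section SmallHead.

Variables (m a : nat) (S L : seq nat).
Hypothesis hSL : small_large m (a :: S) L.

Let sS : sorted ltn (a :: S). Proof. by case/and4P: hSL. Qed.
Let sL : sorted ltn L. Proof. by case/and4P: hSL. Qed.
Let Sm : all (fun x => x < m) S. Proof. by case/and4P: hSL => _ _ /andP[]. Qed.
Let mL : all (leq m) L. Proof. by case/and4P: hSL. Qed.
Let aS : all (ltn a) S. Proof. exact: order_path_min ltn_trans sS. Qed.
Let am : a < m. Proof. by case/and4P: hSL => _ _ /andP[]. Qed.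

Let aY : all (ltn a) (S ++ L).
Proof. by rewrite all_cat aS; apply/allP => x /(allP mL); rewrite /ltn /=; lia. Qed.

Let uY : uniq (a :: S ++ L).
Proof.
rewrite /= cat_uniq (sorted_uniq ltn_trans ltnn (path_sorted sS)).
rewrite (sorted_uniq ltn_trans ltnn sL) andbT.
apply/andP; split; first by apply/negP => /(allP aY); rewrite /ltn /= ltnn.
apply/hasPn => x xL; apply/negP => /(allP Sm) xm.
by have := allP mL x xL; rewrite leqNgt xm.
Qed.

Lemma nvalid_head_small Q :
  nvalid m (fun w => cond_first m a w && Q (a :: w)) (rem a (a :: S ++ L)) =
  nvalid m (fun w => Q (a :: w)) (S ++ L).
Proof.
rewrite /= eqxx; apply: eq_nvalid => w /perm_mem wY.
by rewrite cond_first_min //; apply/allP => x; rewrite wY; apply: (allP aY).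
Qed.

Lemma nvalid_mid_small y : y \in S ->
  nvalid m (fun w => cond_first m y w && predT (y :: w)) (rem y (a :: S ++ L)) =
  nvalid m predT ([seq x <- S | y < x] ++ L).
Proof.
move=> yS; have ay : a < y := allP aS y yS; have ym : y < m := allP Sm y yS.
have uS : uniq S by have := uY; rewrite /= cat_uniq => /andP[_ /and3P[]].
rewrite /= (ltn_eqF ay) rem_cat_l // (@eq_nvalid _ _ (inc_below y)) => [|w _]; last first.
  by rewrite /cond_first ym andbT.
rewrite -cat_cons nvalid_inc_below_filter.
- rewrite /= ltnNge (ltnW ay) /= rem_filter // -filter_predI.
  by congr (nvalid _ _ (_ ++ _)); apply: eq_filter => x /=; apply: andb_idr => /gtn_eqF ->.
- by have := subseq_sorted ltn_trans (rem_subseq y (a :: S)) sS; rewrite /= (ltn_eqF ay).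
- by rewrite inE negb_or eq_sym (ltn_eqF ay) mem_rem_uniqF.
- by apply: sub_all mL => x; apply: leq_trans (ltnW ym).
- by have := rem_uniq y uY; rewrite /= (ltn_eqF ay) rem_cat_l.
Qed.

Section LargeHead.

Variables (b : nat) (L' : seq nat).
Hypothesis EL : L = b :: L'.

Let mb : m <= b. Proof. by move: mL; rewrite EL => /andP[]. Qed.
Let bL' : all (ltn b) L'.
Proof. by have := sL; rewrite EL => /(order_path_min ltn_trans). Qed.

Lemma nvalid_head_large Q :
  nvalid m (fun w => cond_first m b w && Q (b :: w)) (rem b (a :: S ++ b :: L')) =
  nvalid m (fun w => small_inc m w && Q (b :: w)) (a :: S ++ L').
Proof.
have bS : b \notin S by apply/negP => /(allP Sm); rewrite ltnNge mb.
rewrite /= (ltn_eqF (leq_trans am mb)) rem_cat_r // /= eqxx.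
apply: eq_nvalid => w /perm_mem wY; rewrite cond_first_large_inc // => x.
rewrite wY inE mem_cat => /or3P[/eqP -> | xS | xL'].
- by rewrite am (leq_trans am mb).
- by have xm := allP Sm x xS; rewrite xm (leq_trans xm mb).
have bx : b < x := allP bL' x xL'.
by rewrite ltnNge (ltnW bx) ltnNge (leq_trans mb (ltnW bx)).
Qed.

Lemma nvalid_inc_head_large :
  nvalid m (fun w => cond_first m b w && small_inc m (b :: w)) (rem b (a :: S ++ b :: L')) =
  nvalid m (small_inc m) (a :: S ++ L').
Proof.
have bY : b \notin a :: S ++ L'.
  rewrite inE mem_cat negb_or (gtn_eqF (leq_trans am mb)) /= negb_or.
  apply/andP; split; apply/negP; first by move/(allP Sm); rewrite ltnNge mb.
  by move/(allP bL'); rewrite /ltn /= ltnn.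
rewrite nvalid_head_large; apply: eq_nvalid => w /perm_mem wY.
by rewrite small_inc_cons ?wY // ltnNge mb andbT andbb.
Qed.

Lemma nvalid_tail_large Q :
  \sum_(y <- L') nvalid m (fun w => cond_first m y w && Q (y :: w)) (rem y (a :: S ++ b :: L')) = 0.
Proof.
apply: big1_seq => y /andP[_ yL']; have by_ : b < y := allP bL' y yL'.
apply: nvalid_pred0 => w /perm_mem wY.
rewrite (@cond_first_large_blocked m y w a b) ?(leq_trans am mb) ?mb //.
- by rewrite (leq_trans mb (ltnW by_)).
- by rewrite wY rem_mem ?mem_head // (ltn_eqF (leq_trans am (leq_trans mb (ltnW by_)))).
- by rewrite wY rem_mem ?(ltn_eqF by_) // inE mem_cat mem_head !orbT.
Qed.

End LargeHead.

Lemma nvalid_small_first :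
  nvalid m predT (a :: S ++ L) =
  nvalid m predT (S ++ L) + \sum_(y <- S) nvalid m predT ([seq x <- S | y < x] ++ L) +
  (if L is b :: L' then nvalid m (small_inc m) (a :: S ++ L') else 0).
Proof.
rewrite nvalid_first // big_cons big_cat nvalid_head_small -addnA; congr (_ + (_ + _)).
  by apply: eq_big_seq => y yS; rewrite nvalid_mid_small.
case EL: L => [|b L']; first by rewrite big_nil.
rewrite big_cons nvalid_tail_large // nvalid_head_large //= addn0.
by apply: eq_nvalid => w _; rewrite andbT.
Qed.

Lemma nvalid_inc_small_first :
  nvalid m (small_inc m) (a :: S ++ L) =
  nvalid m (small_inc m) (S ++ L) +
  (if L is b :: L' then nvalid m (small_inc m) (a :: S ++ L') else 0).
Proof.
rewrite nvalid_first // big_cons big_cat nvalid_head_small big1_seq => [|y /andP[_ yS]].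
  congr (_ + _); last first.
    case EL: L => [|b L']; first by rewrite big_nil.
    by rewrite big_cons nvalid_tail_large // nvalid_inc_head_large //= addn0.
  apply: eq_nvalid => w /perm_mem wY.
  have aw : all (leq a) w by apply/allP => x; rewrite wY => /(allP aY) /ltnW.
  by rewrite small_inc_cons ?am ?aw ?andbT // wY; apply/negP => /(allP aY); rewrite /ltn /= ltnn.
have ay : a < y := allP aS y yS; apply: nvalid_pred0 => w /perm_mem wY.
rewrite small_inc_cons ?wY ?mem_rem_uniqF ?(allP Sm y yS) //=.
suff /negbTE -> : ~~ all (leq y) w by rewrite !andbF.
apply/allPn; exists a; last by rewrite -ltnNge.
by rewrite wY rem_mem ?mem_head ?(ltn_eqF ay).
Qed.

End SmallHead.

Lemma nvalid_inc_large m L : all (leq m) L -> nvalid m (small_inc m) L = nvalid m predT L.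
Proof.
move=> /allP mL; apply: eq_nvalid => w /perm_mem wL; apply/allrelP => i j _ jw.
by apply/implyP => /andP[_]; have := mL j; rewrite -wL jw => /(_ isT); lia.
Qed.

Lemma nvalid_large_first m b L : sorted ltn (b :: L) -> all (leq m) (b :: L) ->
  nvalid m predT (b :: L) =
  nvalid m predT L + (if L is _ :: L' then nvalid m predT (b :: L') else 0).
Proof.
move=> sbL /andP[mb mL]; have bL := order_path_min ltn_trans sbL.
rewrite nvalid_first ?(sorted_uniq ltn_trans ltnn sbL) // big_cons [rem b _]/= eqxx.
congr (_ + _).
  apply: eq_nvalid => w /perm_mem wL.
  by rewrite cond_first_min //; apply/allP => x; rewrite wL => /(allP bL).
case: L sbL mL bL => [|c L'] sbL mL bL; first by rewrite big_nil.
have /andP[bc bL'] := bL; have cL' := order_path_min ltn_trans (path_sorted sbL).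
have mc : m <= c by case/andP: mL.
rewrite big_cons big1_seq => [|y /andP[_ yL']].
  rewrite /= (ltn_eqF bc) eqxx addn0; apply: eq_nvalid => w /perm_mem wL.
  rewrite cond_first_large_vacuous // => i j; rewrite !wL !inE.
  case/predU1P => [-> | iL] /predU1P[-> | jL] ij; first by rewrite ltnn in ij.
  - exact: ltnW (allP cL' j jL).
  - by have := allP bL' i iL; rewrite /ltn /=; lia.
  - exact: ltnW (allP cL' j jL).
have cy : c < y := allP cL' y yL'; apply: nvalid_pred0 => w /perm_mem wY.
rewrite (@cond_first_large_blocked m y w b c) ?bc ?cy ?(leq_trans mc (ltnW cy)) //.
  by rewrite wY rem_mem ?mem_head ?(ltn_eqF (ltn_trans bc cy)).
by rewrite wY rem_mem ?(ltn_eqF cy) // !inE eqxx orbT.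
Qed.

Lemma nvalid_closed_form m S L : small_large m S L ->
  nvalid m predT (S ++ L) = F (size S) (size L) /\
  nvalid m (small_inc m) (S ++ L) = G (size S) (size L).
Proof.
have [N] := ubnP (size S + size L); elim: N S L => // N IH S L /ltnSE leN hSL.
have IHsub S' L' : subseq S' S -> subseq L' L -> size S' + size L' < size S + size L ->
    nvalid m predT (S' ++ L') = F (size S') (size L') /\
    nvalid m (small_inc m) (S' ++ L') = G (size S') (size L').
  move=> sS sL lt; apply: IH; first exact: leq_trans lt leN.
  exact: small_large_subseq sS sL hSL.
clear IH leN.
have IHF S' L' sS sL lt := (IHsub S' L' sS sL lt).1.
have IHG S' L' sS sL lt := (IHsub S' L' sS sL lt).2.
clear IHsub.
have Fpart : nvalid m predT (S ++ L) = F (size S) (size L).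
  case: S hSL IHF IHG => [|a S] hSL IHF IHG.
    case: L hSL IHF IHG => [|b L] hSL IHF IHG; first by rewrite /nvalid /= F0n.
    case/and4P: hSL => _ sbL _ mbL; rewrite nvalid_large_first // F0n.
    rewrite (IHF [::] L) ?sub0seq ?subseq_cons // F0n.
    case: L sbL mbL IHF IHG => [|c L] sbL mbL IHF IHG //=.
    have sub : subseq (b :: L) (b :: c :: L).
      by rewrite -[b :: L]cat1s -[b :: c :: L]cat1s subseq_cat2l subseq_cons.
    by rewrite (IHF [::] (b :: L)) ?sub0seq // F0n /= expnS; lia.
  rewrite nvalid_small_first // F_rec; congr (_ + _ + _).
  - by rewrite (IHF S L) ?subseq_cons.
  - have sS : sorted ltn S by case/and4P: hSL => /path_sorted.
    rewrite -(sum_rank (F^~ (size L))) //; apply: eq_big_seq => y yS.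
    rewrite (IHF _ L) ?(subseq_trans (filter_subseq _ _) (subseq_cons _ _)) ?subseq_refl //.
    by rewrite /= addSn ltnS leq_add2r size_filter count_size.
  - case: L hSL IHF IHG => [|b L] hSL IHF IHG //=.
    by rewrite (IHG (a :: S) L) ?subseq_refl ?subseq_cons ?addnS ?ltnSn.
split=> //; case: S hSL IHF IHG Fpart => [|a S] hSL IHF IHG Fpart.
  by rewrite nvalid_inc_large ?Fpart ?F0n ?G0n //; case/and4P: hSL.
rewrite nvalid_inc_small_first // (IHG S L) ?subseq_cons //.
case: L hSL IHF IHG {Fpart} => [|b L] hSL IHF IHG /=; first by rewrite !Gn0.
by rewrite (IHG (a :: S) L) ?subseq_refl ?subseq_cons ?addnS ?ltnSn // G_pascal.
Qed.

(** * Linear orders as words *)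

Definition word_of_perm n (p : {perm 'I_n}) : seq nat :=
  [seq val ((p^-1)%g k) | k <- enum 'I_n].
Arguments word_of_perm {n}.

Section WordOfPerm.

Variables (n : nat) (p : {perm 'I_n}).

Lemma index_word_of_perm x : index (val x) (word_of_perm p) = p x.
Proof.
rewrite /word_of_perm -{1}(permK p x) (index_map (f := fun k => val ((p^-1)%g k))).
  by rewrite index_enum_ord.
by move=> a b /val_inj /perm_inj.
Qed.

Lemma mem_word_of_perm a : (a \in word_of_perm p) = (a < n).
Proof.
apply/mapP/idP => [[k _ ->] | an]; first exact: ltn_ord.
by exists (p (Ordinal an)); rewrite ?mem_enum ?permK.
Qed.

Lemma uniq_word_of_perm : uniq (word_of_perm p).
Proof. by rewrite map_inj_uniq ?enum_uniq // => a b /val_inj /perm_inj. Qed.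

Lemma perm_word_of_perm : perm_eq (word_of_perm p) (iota 0 n).
Proof.
apply: uniq_perm; rewrite ?uniq_word_of_perm ?iota_uniq // => a.
by rewrite mem_word_of_perm mem_iota.
Qed.

Lemma valid_order_word_of_perm m :
  valid_order (fun x => 2 <= x <= m) p = triples_ok m (word_of_perm p).
Proof.
have before_word x y : before (word_of_perm p) (val x) (val y) = (p x < p y).
  by rewrite /before !index_word_of_perm.
have B_mid i j : i < j -> (2 <= j.+1 <= m) = (j < m).
  by move=> ij; rewrite ltnS (leq_ltn_trans (leq0n i) ij).
apply/forallP/triples_okP => [H a b c | H i].
  rewrite !mem_word_of_perm => an bn cn /andP[ab bc].
  move: (H (Ordinal an)) => /forallP/(_ (Ordinal bn))/forallP/(_ (Ordinal cn)).
  by rewrite /= ab bc /= (B_mid a) // /triple_ok -!(before_word (Ordinal _)).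
apply/forallP => j; apply/forallP => k; apply/implyP => /andP[ij jk].
have := H i j k; rewrite !mem_word_of_perm !ltn_ord ij jk => /(_ isT isT isT isT).
by rewrite (B_mid i) // /triple_ok !before_word.
Qed.

End WordOfPerm.

Lemma word_of_perm_inj n : injective (@word_of_perm n).
Proof.
by move=> p q E; apply/permP => x; apply/val_inj; rewrite /= -!index_word_of_perm E.
Qed.

Lemma card_perm_word n (P : pred (seq nat)) :
  #|[set p : {perm 'I_n} | P (word_of_perm p)]| = count P (permutations (iota 0 n)).
Proof.
have uW : uniq (map (@word_of_perm n) (enum {perm 'I_n})).
  by rewrite map_inj_uniq ?enum_uniq //; apply: word_of_perm_inj.
have sub : {subset map (@word_of_perm n) (enum {perm 'I_n}) <= permutations (iota 0 n)}.
  by move=> w /mapP[p _ ->]; rewrite mem_permutations perm_word_of_perm.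
have sz : size (permutations (iota 0 n)) <= size (map (@word_of_perm n) (enum {perm 'I_n})).
  by rewrite size_permutations ?iota_uniq // size_iota size_map -cardE card_Sn.
have [_ memW] := uniq_min_size uW sub sz.
rewrite card_set_count -count_map.
by apply/seq.permP/uniq_perm; rewrite ?permutations_uniq.
Qed.

Theorem proposition7 (n : nat) (Hev : ~~ odd n) (Hn : 4 <= n) :
  f n (fun x => 2 <= x <= n./2) =
  2 ^ (n - 1) +
  \sum_(1 <= i < n./2) \sum_(1 <= j < n./2)
     'C(i + j - 2, i - 1) * 2 ^ (n - i - j - 2).
Proof.
have [m ->] : exists m, n = m.*2.
  by exists n./2; rewrite -[LHS]odd_double_half (negbTE Hev).
have hSL : small_large m (iota 0 m) (iota m m).
  rewrite /small_large !iota_ltn_sorted /=.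
  by apply/andP; split; apply/allP => x; rewrite mem_iota; lia.
have [nvalidF _] := nvalid_closed_form _ _ _ hSL.
rewrite !size_iota -iotaD addnn in nvalidF.
rewrite doubleK -F_diag -nvalidF /f.
under eq_finset => p do rewrite valid_order_word_of_perm.
by rewrite card_perm_word; apply: eq_count => w; rewrite andbT.
Qed.
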